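(* On the class of symmetric bimodal models, $\mathcal{L}(\boxdot)$ is less expressive than $\mathcal{L}(\boxplus)$: every $\mathcal{L}(\boxdot)$-formula is equivalent on this class to some $\mathcal{L}(\boxplus)$-formula, but some $\mathcal{L}(\boxplus)$-formula is not equivalent on this class to any $\mathcal{L}(\boxdot)$-formula.
   Context: Fix a nonempty set $\mathbf{P}$ of propositional variables. A bimodal model is $\mathcal{M}=\langle S,R_1,R_2,V\rangle$ with $S$ a nonempty set, $R_1,R_2\subseteq S\times S$, and $V:\mathbf{P}\to\mathcal{P}(S)$. A bimodal model is symmetric if both $R_1$ and $R_2$ are symmetric. Write $R_i(s)=\{t\mid sR_it\}$. The languages are $\mathcal{L}(\boxdot):\ \phi::=p\mid\neg\phi\mid(\phi\wedge\phi)\mid\boxdot\phi$ and $\mathcal{L}(\boxplus):\ \phi::=p\mid\neg\phi\mid(\phi\wedge\phi)\mid\boxplus\phi$. Truth: $\mathcal{M},s\vDash p$ iff $s\in V(p)$; Booleans as usual; $\mathcal{M},s\vDash\boxdot\phi$ iff for all $t,u$ with $sR_1t$ and $sR_2u$, ($\mathcal{M},t\vDash\phi\iff\mathcal{M},u\vDash\phi$); $\mathcal{M},s\vDash\boxplus\phi$ iff ($\mathcal{M},t\vDash\phi$ for all $t\in R_1(s)$) or ($\mathcal{M},u\vDash\neg\phi$ for all $u\in R_2(s)$). Two formulas are equivalent on a class of models if they are true at exactly the same pointed models of that class. *)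

Set Implicit Arguments.

Record model (P S : Type) : Type := Model {
  R1 : S -> S -> Prop;
  R2 : S -> S -> Prop;
  V  : P -> S -> Prop
}.

Definition symmetric_model (P S : Type) (M : model P S) : Prop :=
  (forall s t, R1 M s t -> R1 M t s) /\ (forall s t, R2 M s t -> R2 M t s).

Inductive fdot (P : Type) : Type :=
| DVar : P -> fdot P
| DNeg : fdot P -> fdot P
| DAnd : fdot P -> fdot P -> fdot P
| DBox : fdot P -> fdot P.

Inductive fplus (P : Type) : Type :=
| PVar : P -> fplus P
| PNeg : fplus P -> fplus P
| PAnd : fplus P -> fplus P -> fplus P
| PBox : fplus P -> fplus P.

Fixpoint sat_dot (P S : Type) (M : model P S) (s : S) (phi : fdot P) : Prop :=
  match phi with
  | DVar p => V M p s
  | DNeg phi => ~ sat_dot M s phi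
  | DAnd phi psi => sat_dot M s phi /\ sat_dot M s psi
  | DBox phi => forall t u, R1 M s t -> R2 M s u ->
                  (sat_dot M t phi <-> sat_dot M u phi)
  end.

Fixpoint sat_plus (P S : Type) (M : model P S) (s : S) (phi : fplus P) : Prop :=
  match phi with
  | PVar p => V M p s
  | PNeg phi => ~ sat_plus M s phi
  | PAnd phi psi => sat_plus M s phi /\ sat_plus M s psi
  | PBox phi => (forall t, R1 M s t -> sat_plus M t phi) \/
                (forall u, R2 M s u -> ~ sat_plus M u phi)
  end.

Definition equiv_sym (P : Type) (phi : fdot P) (psi : fplus P) : Prop :=
  forall (S : Type) (M : model P S), symmetric_model M ->
    forall s : S, sat_dot M s phi <-> sat_plus M s psi.

From Stdlib Require Import Classical Setoid.

Set Implicit Arguments.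

(* Write X = R1(s), Y = R2(s), A = the truth set of phi.  Then
   boxdot phi says "every X-point and every Y-point give A the same value", and
   classically this is the conjunction of boxplus phi ("A holds on X, or
   fails on Y") and boxplus ~phi ("A fails on X, or holds on Y").  So the
   translation boxdot phi |-> boxplus phi /\ boxplus ~phi is truth-preserving
   on every model, symmetric or not.

   The boxdot clause is symmetric in R1 and R2, so every
   L(boxdot)-formula has the same truth value in M and in the model with R1
   and R2 exchanged.  boxplus p is not swap-invariant: on the symmetric
   "spoke" 1 -R1- 0 -R2- 2 with p true only at 1 it holds at 0, while after
   the swap it fails at 0. *)

Section Neighbourhoods.
Variable S : Type.

Definition agree (X Y A : S -> Prop) : Prop :=
  forall t u, X t -> Y u -> (A t <-> A u).

Definition plus_clause (X Y A : S -> Prop) : Prop :=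
  (forall t, X t -> A t) \/ (forall u, Y u -> ~ A u).

Lemma agree_iff_plus_clauses (X Y A : S -> Prop) :
  agree X Y A <-> plus_clause X Y A /\ plus_clause X Y (fun x => ~ A x).
Proof.
  split.
  - intro Hagree; split.
    + destruct (classic (exists u, Y u /\ A u)) as [[u [Yu Au]] | noA].
      * left; intros t Xt; exact (proj2 (Hagree t u Xt Yu) Au).
      * right; intros u Yu Au; apply noA; exists u; split; assumption.
    + destruct (classic (exists u, Y u /\ ~ A u)) as [[u [Yu nAu]] | nonA].
      * left; intros t Xt At; exact (nAu (proj1 (Hagree t u Xt Yu) At)).
      * right; intros u Yu nAu; apply nonA; exists u; split; assumption.
  - intros [[allA | noA] [allnA | nonA]] t u Xt Yu.
    + exact (False_ind _ (allnA t Xt (allA t Xt))).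
    + split; intros _; [apply NNPP; exact (nonA u Yu) | exact (allA t Xt)].
    + split; intros H; [exact (False_ind _ (allnA t Xt H))
                       | exact (False_ind _ (noA u Yu H))].
    + exact (False_ind _ (nonA u Yu (noA u Yu))).
Qed.

Lemma agree_comm (X Y A : S -> Prop) : agree X Y A -> agree Y X A.
Proof. intros Hagree t u Yt Xu; symmetry; exact (Hagree u t Xu Yt). Qed.

End Neighbourhoods.

Fixpoint translate {P : Type} (phi : fdot P) : fplus P :=
  match phi with
  | DVar p => PVar p
  | DNeg a => PNeg (translate a)
  | DAnd a b => PAnd (translate a) (translate b)
  | DBox a => PAnd (PBox (translate a)) (PBox (PNeg (translate a)))
  end.

Lemma translate_correct (P S : Type) (M : model P S) (phi : fdot P) :
  forall s, sat_dot M s phi <-> sat_plus M s (translate phi).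
Proof.
  induction phi as [p | a IH | a IHa b IHb | a IH]; intro s; simpl.
  - reflexivity.
  - rewrite IH; reflexivity.
  - rewrite IHa, IHb; reflexivity.
  - setoid_rewrite IH.
    exact (@agree_iff_plus_clauses S (R1 M s) (R2 M s)
             (fun x => sat_plus M x (translate a))).
Qed.

Definition swap {P S : Type} (M : model P S) : model P S :=
  Model (R2 M) (R1 M) (V M).

Lemma swap_symmetric (P S : Type) (M : model P S) :
  symmetric_model M -> symmetric_model (swap M).
Proof. intros [sym1 sym2]; split; assumption. Qed.

Lemma sat_dot_swap (P S : Type) (M : model P S) (phi : fdot P) :
  forall s, sat_dot M s phi <-> sat_dot (swap M) s phi.
Proof.
  induction phi as [p | a IH | a IHa b IHb | a IH]; intro s; simpl.
  - reflexivity.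
  - rewrite IH; reflexivity.
  - rewrite IHa, IHb; reflexivity.
  - setoid_rewrite <- IH; split; apply agree_comm.
Qed.

Lemma not_equiv_of_swap_separates (P S : Type) (M : model P S) (s : S)
    (psi : fplus P) :
  symmetric_model M -> sat_plus M s psi -> ~ sat_plus (swap M) s psi ->
  forall phi : fdot P, ~ equiv_sym phi psi.
Proof.
  intros symM holds fails phi Heq.
  apply fails, (Heq S (swap M) (swap_symmetric symM) s).
  apply (sat_dot_swap M phi s), (Heq S M symM s), holds.
Qed.

Definition edge (a b x y : nat) : Prop := (x = a /\ y = b) \/ (x = b /\ y = a).

Lemma edge_sym (a b : nat) : forall x y, edge a b x y -> edge a b y x.
Proof. unfold edge; intros x y; tauto. Qed.

Definition spoke (P : Type) : model P nat :=
  Model (edge 0 1) (edge 0 2) (fun (_ : P) (x : nat) => x = 1).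

Lemma spoke_symmetric (P : Type) : symmetric_model (spoke P).
Proof. split; apply edge_sym. Qed.

(* boxplus p holds at the centre: p holds at the unique R1-successor 1. *)
Lemma spoke_box_holds (P : Type) (p : P) :
  sat_plus (spoke P) 0 (PBox (PVar p)).
Proof.
  left; intros t [[_ ->] | [absurd _]]; [reflexivity | discriminate].
Qed.

(* After the swap it fails: p fails at the R1-successor 2 and holds at the
   R2-successor 1. *)
Lemma spoke_swap_box_fails (P : Type) (p : P) :
  ~ sat_plus (swap (spoke P)) 0 (PBox (PVar p)).
Proof.
  intros [all_p | no_p].
  - discriminate (all_p 2 (or_introl (conj eq_refl eq_refl))).
  - exact (no_p 1 (or_introl (conj eq_refl eq_refl)) eq_refl).
Qed.

Theorem proposition3p3 (P : Type) (p0 : P) :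
  (forall phi : fdot P, exists psi : fplus P, equiv_sym phi psi) /\
  (exists psi : fplus P, forall phi : fdot P, ~ equiv_sym phi psi).
Proof.
  split.
  - intro phi; exists (translate phi); intros S M _ s; apply translate_correct.
  - exists (PBox (PVar p0)).
    exact (not_equiv_of_swap_separates 0 (spoke_symmetric P)
             (spoke_box_holds p0) (@spoke_swap_box_fails P p0)).
Qed.
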